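(* Let $N$ be a finite set of players and $E$ a finite set of resources; for each $i\in N$ let $d_i\in\mathbb{N}$ and $E_i\subseteq E$ with $E_i\neq\emptyset$, and for each $e\in E$ let $c_e:\mathbb{N}\to\mathbb{R}_+$ be non-decreasing and convex. Define $f_i(U)=d_i$ if $U\cap E_i\neq\emptyset$ and $f_i(U)=0$ otherwise, and $C_{i,e}(x;t)=c_e(x+t)\,x$. Then each $f_i$ is an integral polymatroid rank function, $\mathbb{B}_{f_i}(d_i)$ is exactly the set of vectors $\vec x_i\in\mathbb{N}^E$ with $x_i(E)=d_i$ and $x_{i,e}=0$ for $e\notin E_i$, and each $C_{i,e}$ is regular; in particular, the singleton integer-splittable congestion game in which player $i$ distributes $d_i$ integral units over $E_i$ and has private cost $\pi_i(\vec x)=\sum_{e\in E}c_e(x_{i,e}+x_{-i,e})x_{i,e}$ is a polymatroid game.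
   Context: $\mathbb{N}=\{0,1,2,\dots\}$. An integral polymatroid rank function is $f:2^E\to\mathbb{N}$ with $f(\emptyset)=0$, monotone and submodular. $x(U)=\sum_{e\in U}x_e$, $\mathbb{B}_f(d)=\{\vec x\in\mathbb{N}^E: x(U)\le f(U)\ \forall U\subseteq E,\ x(E)=d\}$. $x_{-i,e}=\sum_{j\neq i}x_{j,e}$. For $C:\mathbb{N}\times\mathbb{N}\to\mathbb{R}$, $C^-(x;t)=C(x;t)-C(x-1;t)$ for $x\ge1$; $C$ is regular if $C^-(x;t)\le C^-(x;t+1)$ and $C^-(x;t+1)\le C^-(x+1;t)$ for all $x\ge1,t\in\mathbb{N}$. A polymatroid game consists of players $i\in N$ with demands $d_i$, integral polymatroid rank functions $f_i$ on the common resource set $E$, strategy sets $\mathbb{B}_{f_i}(d_i)$, and private costs $\pi_i(\vec x)=\sum_{e\in E}C_{i,e}(x_{i,e};x_{-i,e})$ with every $C_{i,e}:\mathbb{N}\times\mathbb{N}\to\mathbb{R}_+$ regular. *)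

From mathcomp Require Import all_boot all_order all_algebra.
Set Implicit Arguments. Unset Strict Implicit. Unset Printing Implicit Defensive.
Import Order.TTheory GRing.Theory Num.Theory.
Local Open Scope ring_scope.

Definition xsum (E : finType) (x : E -> nat) (U : {set E}) : nat :=
  (\sum_(e in U) x e)%N.

Definition polymatroid_rank (E : finType) (f : {set E} -> nat) : Prop :=
  [/\ f set0 = 0%N,
      (forall U V : {set E}, U \subset V -> (f U <= f V)%N) &
      (forall U V : {set E}, (f (U :|: V) + f (U :&: V) <= f U + f V)%N)].

Definition inB (E : finType) (f : {set E} -> nat) (d : nat) (x : E -> nat) : Prop :=
  (forall U : {set E}, (xsum x U <= f U)%N) /\ xsum x setT = d.

(* C^-(x;t) = C(x;t) - C(x-1;t) (used for x >= 1) *)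
Definition Cminus (R : realFieldType) (C : nat -> nat -> R) (x t : nat) : R :=
  C x t - C x.-1 t.

Definition regular (R : realFieldType) (C : nat -> nat -> R) : Prop :=
  forall x t : nat, (1 <= x)%N ->
    Cminus C x t <= Cminus C x t.+1 /\ Cminus C x t.+1 <= Cminus C x.+1 t.

Definition polymatroid_game (R : realFieldType) (N E : finType)
  (f : N -> {set E} -> nat) (C : N -> E -> nat -> nat -> R) : Prop :=
  (forall i, polymatroid_rank (f i)) /\
  (forall i e, regular (C i e) /\ forall x t, 0 <= C i e x t).

Definition f_single (E : finType) (d : nat) (Ei : {set E}) (U : {set E}) : nat :=
  if U :&: Ei != set0 then d else 0%N.

Definition C_single (R : realFieldType) (c : nat -> R) (x t : nat) : R :=
  c (x + t)%N * x%:R.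

Definition nondecreasing_seq (R : realFieldType) (c : nat -> R) : Prop :=
  forall x : nat, c x <= c x.+1.

Definition convex_seq (R : realFieldType) (c : nat -> R) : Prop :=
  forall x : nat, c x.+1 - c x <= c x.+2 - c x.+1.

(** The singleton rank function [f_single d Ei] is [d] times the indicator of
    "[U] meets [Ei]"; that indicator is monotone, and the event "[U :|: V] meets
    [Ei]" is the union of the events for [U] and [V] while "[U :&: V] meets [Ei]"
    implies both, which gives submodularity.  A vector bounded by [f_single] has
    no mass on the complement of [Ei] (a set of rank [0]), and conversely every
    bound [x(U) <= d] is implied by [x(E) = d].  Regularity of [c(x+t) x] is the
    discrete product rule
    [C^-(x+1; t) = c(x+t+1) + x (c(x+t+1) - c(x+t))]
    combined with monotonicity and convexity of [c]. *)
From mathcomp Require Import all_boot all_order all_algebra.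
From mathcomp Require Import ring.
Set Implicit Arguments. Unset Strict Implicit. Unset Printing Implicit Defensive.
Import Order.TTheory GRing.Theory Num.Theory.
Local Open Scope ring_scope.

Section SingletonRank.

Variables (E : finType) (d : nat) (Ei : {set E}).

Lemma f_singleE (U : {set E}) : f_single d Ei U = (d * (U :&: Ei != set0))%N.
Proof. by rewrite /f_single; case: ifP; rewrite ?muln1 ?muln0. Qed.

Lemma f_single_polymatroid : polymatroid_rank (f_single d Ei).
Proof.
split=> [|U V sUV|U V]; rewrite !f_singleE.
- by rewrite set0I eqxx muln0.
- have meetV : U :&: Ei != set0 -> V :&: Ei != set0.
    by apply: contraNneq => eqV; rewrite -subset0 -eqV setSI.
  by case: (U :&: Ei != set0) meetV => [->|_]; rewrite ?muln0.
- have meetU : (U :|: V) :&: Ei != set0 = (U :&: Ei != set0) || (V :&: Ei != set0).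
    by rewrite setIUl setU_eq0 negb_and.
  have meetI : (U :&: V) :&: Ei != set0 -> (U :&: Ei != set0) && (V :&: Ei != set0).
    by move=> nz; apply/andP; split; apply: contraNneq nz; rewrite -!subset0 => <-;
      rewrite setSI // (subsetIl, subsetIr).
  rewrite meetU -!mulnDr leq_mul2l; apply/orP; right.
  case: (U :&: V :&: Ei != set0) meetI => [/(_ isT)/andP[-> ->] //|_].
  by case: (U :&: Ei != set0); case: (V :&: Ei != set0).
Qed.

End SingletonRank.

Section IntegralVectors.

Variables (E : finType) (x : E -> nat).

Lemma leq_xsum (U V : {set E}) : U \subset V -> (xsum x U <= xsum x V)%N.
Proof.
by move=> sUV; rewrite /xsum [X in (_ <= X)%N](big_setID U) /= (setIidPr sUV) leq_addr.
Qed.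

Lemma xsum_eq0 (U : {set E}) : xsum x U = 0%N <-> {in U, forall e, x e = 0%N}.
Proof.
rewrite /xsum; split=> [/eqP|x0]; last by rewrite big1.
by rewrite sum_nat_eq0 => /forallP x0 e eU; apply/eqP; exact: (implyP (x0 e)).
Qed.

Lemma inB_f_single d (Ei : {set E}) :
  inB (f_single d Ei) d x <-> xsum x setT = d /\ forall e, e \notin Ei -> x e = 0%N.
Proof.
split=> [[xle xE]|[xE x0]]; split=> //.
- move=> e eNEi; have /eqP/xsum_eq0 : (xsum x (~: Ei) == 0)%N.
    by rewrite -leqn0; move: (xle (~: Ei)); rewrite /f_single setIC setICr eqxx.
  by apply; rewrite inE.
- move=> U; rewrite /f_single; case: ifPn => [_|/negPn/eqP UEi0].
    by rewrite -xE leq_xsum ?subsetT.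
  rewrite (proj2 (xsum_eq0 U)) // => e eU; apply: x0; apply: contra_eqN UEi0 => eEi.
  by apply/set0Pn; exists e; rewrite inE eU.
Qed.

End IntegralVectors.

Section SingletonCost.

Variables (R : realFieldType) (c : nat -> R).

Lemma Cminus_C_single x t :
  Cminus (C_single c) x.+1 t = c (x + t).+1 + x%:R * (c (x + t).+1 - c (x + t)).
Proof. by rewrite /Cminus /C_single /= addSn; ring. Qed.

Lemma C_single_regular : nondecreasing_seq c -> convex_seq c -> regular (C_single c).
Proof.
move=> c_mono c_conv [//|x] t _.
have incr_ge0 : 0 <= c (x + t).+2 - c (x + t).+1 by rewrite subr_ge0.
rewrite !Cminus_C_single addnS addSn; split.
- by rewrite lerD // ler_wpM2l.
- by rewrite lerD2l mulrSr mulrDl mul1r lerDl.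
Qed.

Lemma C_single_ge0 : (forall x, 0 <= c x) -> forall x t, 0 <= C_single c x t.
Proof. by move=> c_ge0 x t; rewrite mulr_ge0. Qed.

End SingletonCost.

Theorem proposition4p1 (R : realFieldType) (N E : finType)
  (d : N -> nat) (Ei : N -> {set E}) (c : E -> nat -> R)
  (hEi : forall i, Ei i != set0)
  (hc0 : forall e x, 0 <= c e x)
  (hcmono : forall e, nondecreasing_seq (c e))
  (hcconv : forall e, convex_seq (c e)) :
  [/\ (forall i, polymatroid_rank (f_single (d i) (Ei i))),
      (forall i (x : E -> nat),
         inB (f_single (d i) (Ei i)) (d i) x <->
         (xsum x setT = d i /\ forall e, e \notin Ei i -> x e = 0%N)),
      (forall (i : N) e, regular (C_single (c e))) &
      polymatroid_game (fun i => f_single (d i) (Ei i))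
                       (fun (i : N) e => C_single (c e))].
Proof.
have rank i : polymatroid_rank (f_single (d i) (Ei i)) by exact: f_single_polymatroid.
have reg e : regular (C_single (c e)) by exact: C_single_regular.
split=> // [i x|]; first exact: inB_f_single.
by split=> // i e; split; [exact: reg | exact: C_single_ge0].
Qed.
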